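(* For every $n$ there exists a binary integer program $\mathcal{I}^*$ with $2n$ binary variables such that: (i) every branch-and-bound tree $\mathcal{T}(\mathcal{I}^* )$ solving $\mathcal{I}^*$ which has the property that, at every internal node $N$ with returned LP optimal solution $x$, the branching variable $j$ satisfies $x_j\in(0,1)$, has $|\mathcal{T}(\mathcal{I}^* )|\ge 2^{n+1}-1$; in particular every branch-and-bound tree $\mathcal{T}_S(\mathcal{I}^* )$ generated by strong-branching that solves $\mathcal{I}^*$ has $|\mathcal{T}_S(\mathcal{I}^* )|\ge 2^{n+1}-1$; and (ii) there exists a branch-and-bound tree $\mathcal{T}^*$ solving $\mathcal{I}^*$ with $|\mathcal{T}^*(\mathcal{I}^* )|\le 4n+1$.
   Context: A branch-and-bound tree for a binary program over a polytope is a rooted binary tree in which each node corresponds to the polytope intersected with constraints fixing some variables to $0$ or $1$ (those fixed on the path from the root); at each node the LP solver returns an optimal extreme point of the node LP; each internal node branches on one binary variable $z$, its children adding $z=0$ and $z=1$. The tree solves the instance if at every leaf the LP is infeasible, or its returned optimal solution is integral, or its value is no better than the best integral solution found. $|\mathcal{T}|$ is the number of nodes. Strong branching only branches on variables fractional in the returned LP solution (choosing among them by maximizing a score of the children's LP bound changes). *)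

From HB Require Import structures.
From mathcomp Require Import all_boot all_order all_algebra.
Set Implicit Arguments. Unset Strict Implicit. Unset Printing Implicit Defensive.
Import Order.TTheory GRing.Theory Num.Theory.
Local Open Scope ring_scope.

(* A binary integer program  max c^T x  s.t.  A x <= b,  x in {0,1}^d.
   Its LP relaxation is  max c^T x  s.t.  A x <= b, 0 <= x <= 1.
   Points are column vectors 'cV[R]_d. *)

Section BB.
Variables (R : realFieldType) (d m : nat).
Variables (A : 'M[R]_(m, d)) (b : 'cV[R]_m) (c : 'cV[R]_d).

Definition objval (x : 'cV[R]_d) : R := \sum_(i < d) c i 0 * x i 0.

(* a fixing of variables: None = free, Some s = fixed to s (false=0, true=1) *)
Definition fixing (d : nat) := 'I_d -> option bool.
Definition root_fixing : fixing d := fun _ => None.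
Definition fix_var (f : fixing d) (j : 'I_d) (s : bool) : fixing d :=
  fun i => if i == j then Some s else f i.

Definition node_feas (f : fixing d) (x : 'cV[R]_d) : Prop :=
  (forall i, (A *m x) i 0 <= b i 0) /\
  (forall j, 0 <= x j 0 <= 1) /\
  (forall j s, f j = Some s -> x j 0 = (s : nat)%:R).

Definition extreme_point (S : 'cV[R]_d -> Prop) (x : 'cV[R]_d) : Prop :=
  S x /\ forall (y z : 'cV[R]_d) (t : R), S y -> S z -> 0 < t < 1 ->
    x = t *: y + (1 - t) *: z -> y = z.

Definition lp_opt_extreme (f : fixing d) (x : 'cV[R]_d) : Prop :=
  extreme_point (node_feas f) x /\
  forall y, node_feas f y -> objval y <= objval x.

Definition lp_infeasible (f : fixing d) : Prop := forall x, ~ node_feas f x.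

Definition lp_value (f : fixing d) (v : option R) : Prop :=
  match v with
  | None => lp_infeasible f
  | Some z => exists x, node_feas f x /\ objval x = z /\
                        forall y, node_feas f y -> objval y <= z
  end.

Definition integral (x : 'cV[R]_d) : Prop := forall j, x j 0 = 0 \/ x j 0 = 1.

Definition fractional_at (x : 'cV[R]_d) (j : 'I_d) : Prop := 0 < x j 0 < 1.

End BB.

(* A branch-and-bound tree: each node records the LP solution returned by the
   solver (a leaf may record None = infeasible LP); an internal node records
   its branching variable j and children for  x_j = 0  and  x_j = 1. *)
Inductive bbtree (R : realFieldType) (d : nat) : Type :=
| BLeaf : option 'cV[R]_d -> bbtree R d
| BNode : 'cV[R]_d -> 'I_d -> bbtree R d -> bbtree R d -> bbtree R d.
Arguments BLeaf {R d}.
Arguments BNode {R d}.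

Section Trees.
Variables (R : realFieldType) (d m : nat).
Variables (A : 'M[R]_(m, d)) (b : 'cV[R]_m) (c : 'cV[R]_d).

Fixpoint tree_size (t : bbtree R d) : nat :=
  match t with
  | BLeaf _ => 1
  | BNode _ _ t0 t1 => (tree_size t0 + tree_size t1).+1
  end.

Fixpoint tree_sols (t : bbtree R d) : seq 'cV[R]_d :=
  match t with
  | BLeaf None => [::]
  | BLeaf (Some x) => [:: x]
  | BNode x _ t0 t1 => x :: tree_sols t0 ++ tree_sols t1
  end.

Fixpoint valid_tree (f : fixing d) (t : bbtree R d) : Prop :=
  match t with
  | BLeaf None => lp_infeasible A b f
  | BLeaf (Some x) => lp_opt_extreme A b c f x
  | BNode x j t0 t1 =>
      lp_opt_extreme A b c f x /\
      valid_tree (fix_var f j false) t0 /\ valid_tree (fix_var f j true) t1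
  end.

Fixpoint leaf_sols (t : bbtree R d) : seq (option 'cV[R]_d) :=
  match t with
  | BLeaf o => [:: o]
  | BNode _ _ t0 t1 => leaf_sols t0 ++ leaf_sols t1
  end.

Definition solves (t : bbtree R d) : Prop :=
  valid_tree (@root_fixing d) t /\
  forall x, Some x \in leaf_sols t ->
    integral x \/
    exists2 y, y \in tree_sols t & integral y /\ objval c x <= objval c y.

Fixpoint fractional_branching (t : bbtree R d) : Prop :=
  match t with
  | BLeaf _ => True
  | BNode x j t0 t1 =>
      fractional_at x j /\ fractional_branching t0 /\ fractional_branching t1
  end.

Fixpoint strong_branching (score : R -> option R -> option R -> R)
    (f : fixing d) (t : bbtree R d) : Prop :=
  match t with
  | BLeaf _ => True
  | BNode x j t0 t1 =>
      fractional_at x j /\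
      (exists vj0 vj1,
         lp_value A b c (fix_var f j false) vj0 /\
         lp_value A b c (fix_var f j true) vj1 /\
         forall k vk0 vk1, fractional_at x k ->
           lp_value A b c (fix_var f k false) vk0 ->
           lp_value A b c (fix_var f k true) vk1 ->
           score (objval c x) vk0 vk1 <= score (objval c x) vj0 vj1) /\
      strong_branching score (fix_var f j false) t0 /\
      strong_branching score (fix_var f j true) t1
  end.

End Trees.

From mathcomp Require Import all_boot all_order all_algebra.
From mathcomp Require Import ring lra zify.
From Stdlib Require Import FunctionalExtensionality.
Import Order.TTheory GRing.Theory Num.Theory.
Local Open Scope ring_scope.
Set Implicit Arguments. Unset Strict Implicit.

(* The instance I* has variables x_0..x_{n-1},
   y_0..y_{n-1}, maximizes -(y_0 + ... + y_{n-1}) and imposes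
   |x_i - 1/2| <= y_i / 2 together with the budget y_0 + ... + y_{n-1} <= n-1.
   An integral x_i forces y_i = 1, so I* has no integral feasible point and a
   solving tree must close every leaf by infeasibility.
   (i) A node reached by fractional branching only fixes x-variables; its
   optimal points have y_i = 1 for fixed and y_i = 0 for free x_i, so only
   free x_i (equal to 1/2) are fractional, and the node LP stays feasible
   while fewer than n of them are fixed.  A generic complete-tree bound then
   forces 2^(n+1) - 1 nodes; strong branching is a special case.
   (ii) Branching on y_i, then on x_i below y_i = 0 (both children
   infeasible), and continuing below y_i = 1, solves I* with 4n + 1 nodes. *)

Lemma convex_comb_max (R : realFieldType) (t a a' z : R) : 0 < t < 1 ->
  a <= z -> a' <= z -> z = t * a + (1 - t) * a' -> a = z /\ a' = z.
Proof. move=> /andP [t0 t1] ha ha' hz; split; nra. Qed.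

Lemma col_mx_system (R : realFieldType) (m1 m2 d : nat)
    (A1 : 'M[R]_(m1, d)) (A2 : 'M[R]_(m2, d))
    (b1 : 'cV[R]_m1) (b2 : 'cV[R]_m2) (x : 'cV[R]_d) :
  (forall r, (col_mx A1 A2 *m x) r 0 <= col_mx b1 b2 r 0) <->
  (forall r, (A1 *m x) r 0 <= b1 r 0) /\ (forall r, (A2 *m x) r 0 <= b2 r 0).
Proof.
rewrite mul_col_mx; split.
  by move=> H; split=> r; [have := H (lshift m2 r) | have := H (rshift m1 r)];
    rewrite ?col_mxEu ?col_mxEd.
move=> [H1 H2] r; rewrite -[r]splitK; case: (split r) => r' /=.
  by rewrite !col_mxEu.
by rewrite !col_mxEd.
Qed.

Section GenericBranchAndBound.
Variables (R : realFieldType) (d m : nat).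
Variables (A : 'M[R]_(m, d)) (b : 'cV[R]_m) (c : 'cV[R]_d).

Lemma objval_segment (u v : 'cV[R]_d) (t : R) :
  objval c (t *: u + (1 - t) *: v) = t * objval c u + (1 - t) * objval c v.
Proof.
rewrite /objval !mulr_sumr -big_split; apply: eq_bigr => k _; rewrite !mxE /=; ring.
Qed.

(* Extreme-point criterion: a feasible optimal point p is an optimal extreme
   point as soon as every optimal feasible point agrees with p on the support
   of p (the remaining coordinates are pinned to 0 by nonnegativity). *)
Lemma opt_extreme_of_support (f : fixing d) (p : 'cV[R]_d) :
  node_feas A b f p ->
  (forall z, node_feas A b f z -> objval c z <= objval c p) ->
  (forall z, node_feas A b f z -> objval c p <= objval c z ->
     forall k, p k 0 != 0 -> z k 0 = p k 0) ->
  lp_opt_extreme A b c f p.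
Proof.
move=> hp hopt hsupp; split=> //; split=> // u v t hu hv ht E.
have Ecoord k : p k 0 = t * u k 0 + (1 - t) * v k 0 by rewrite E !mxE.
have [Ou Ov] : objval c u = objval c p /\ objval c v = objval c p.
  apply: (convex_comb_max ht (hopt u hu) (hopt v hv)).
  by rewrite -objval_segment -E.
apply/matrixP => k l; rewrite (ord1 l).
have [pk0|pkn] := eqVneq (p k 0) 0; last first.
  by rewrite (hsupp u hu _ k pkn) ?(hsupp v hv _ k pkn) ?Ou ?Ov.
have [/andP [u0 _] /andP [v0 _]] : 0 <= u k 0 <= 1 /\ 0 <= v k 0 <= 1.
  by case: hu => _ [hu _]; case: hv => _ [hv _].
have [uk vk] : - u k 0 = 0 /\ - v k 0 = 0.
  apply: (convex_comb_max ht); rewrite ?oppr_le0 //.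
  by rewrite -[0]oppr0 -pk0 Ecoord; ring.
by rewrite -[u k 0]opprK uk -[v k 0]opprK vk.
Qed.

Lemma leaf_sol_in_tree (t : bbtree R d) x :
  Some x \in leaf_sols t -> x \in tree_sols t.
Proof.
elim: t => [o|y j t0 IH0 t1 IH1] /=; first by rewrite inE => /eqP <-; rewrite inE.
by rewrite mem_cat inE mem_cat => /orP [/IH0 ->|/IH1 ->]; rewrite ?orbT.
Qed.

Lemma tree_sol_feasible (t : bbtree R d) f : valid_tree A b c f t ->
  forall x, x \in tree_sols t -> exists g, node_feas A b g x.
Proof.
elim: t f => [[y|]|y j t0 IH0 t1 IH1] f //=.
  by move=> [[hy _] _] x; rewrite inE => /eqP ->; exists f.
move=> [[[hy _] _] [h0 h1]] x; rewrite inE mem_cat => /orP [/eqP ->|/orP [H|H]].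
- by exists f.
- exact: IH0 h0 x H.
- exact: IH1 h1 x H.
Qed.

Lemma solves_infeasible_leaves (t : bbtree R d) :
  (forall g x, node_feas A b g x -> ~ integral x) ->
  solves A b c t -> forall x, Some x \notin leaf_sols t.
Proof.
move=> noint [hv hl] x; apply/negP => hx.
have [hi|[y hy [hiy _]]] := hl x hx.
  by have [g hg] := tree_sol_feasible hv (leaf_sol_in_tree hx); exact: noint hg hi.
by have [g hg] := tree_sol_feasible hv hy; exact: noint hg hiy.
Qed.

Lemma strong_branching_fractional score f (t : bbtree R d) :
  strong_branching A b c score f t -> fractional_branching t.
Proof.
elim: t f => [o|x j t0 IH0 t1 IH1] f //= [hj [_ [h0 h1]]].
by split=> //; split; [exact: IH0 h0 | exact: IH1 h1].
Qed.

Section CompleteTree.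
Variable inv : fixing d -> nat -> Prop.
Hypothesis inv_feasible : forall f k, inv f k.+1 -> exists x, node_feas A b f x.
Hypothesis inv_branch : forall f k x j s, inv f k.+1 ->
  lp_opt_extreme A b c f x -> fractional_at x j -> inv (fix_var f j s) k.

Lemma complete_tree_size (t : bbtree R d) f k : inv f k ->
  valid_tree A b c f t -> fractional_branching t ->
  (forall x, Some x \notin leaf_sols t) -> (2 ^ k.+1 - 1 <= tree_size t)%N.
Proof.
elim: t f k => [o|x j t0 IH0 t1 IH1] f [|k] hinv //=.
  case: o => [x|] hv _ hl; first by have := hl x; rewrite inE eqxx.
  by have [y hy] := inv_feasible hinv; case: (hv y).
move=> [hx [hv0 hv1]] [hj [hf0 hf1]] hl.
have hl0 y : Some y \notin leaf_sols t0 by apply: contra (hl y); rewrite mem_cat => ->.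
have hl1 y : Some y \notin leaf_sols t1.
  by apply: contra (hl y); rewrite mem_cat orbC => ->.
have := IH0 _ _ (inv_branch false hinv hx hj) hv0 hf0 hl0.
have := IH1 _ _ (inv_branch true hinv hx hj) hv1 hf1 hl1.
have := expn_gt0 2 k.+1; rewrite (expnS 2 k.+1); lia.
Qed.
End CompleteTree.

End GenericBranchAndBound.

Section Instance.
Variables (R : realFieldType) (n : nat).
Local Notation N := n.*2.

Definition xo (i : 'I_n) : 'I_N := cast_ord (addnn n) (lshift n i).
Definition yo (i : 'I_n) : 'I_N := cast_ord (addnn n) (rshift n i).

Lemma xo_inj : injective xo.
Proof. by move=> i i' /(congr1 val) /= /val_inj. Qed.

Lemma yo_inj : injective yo.
Proof. by move=> i i' /(congr1 val) /= /addnI /val_inj. Qed.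

Lemma xo_neq_yo (i i' : 'I_n) : xo i != yo i'.
Proof. by apply/eqP => /(congr1 val) /=; have := ltn_ord i; lia. Qed.

Variant coord_spec : 'I_N -> Type :=
| XCoord i : coord_spec (xo i)
| YCoord i : coord_spec (yo i).

Lemma coordP j : coord_spec j.
Proof.
rewrite -(cast_ordKV (addnn n) j) -[cast_ord _ j]splitK.
by case: split => i; [exact: XCoord | exact: YCoord].
Qed.

Definition pairfun (T : Type) (u v : 'I_n -> T) (j : 'I_N) : T :=
  match split (cast_ord (esym (addnn n)) j) with inl i => u i | inr i => v i end.

Lemma pairfun_x T (u v : 'I_n -> T) i : pairfun u v (xo i) = u i.
Proof. by rewrite /pairfun /xo cast_ordK (unsplitK (inl i : 'I_n + 'I_n)). Qed.

Lemma pairfun_y T (u v : 'I_n -> T) i : pairfun u v (yo i) = v i.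
Proof. by rewrite /pairfun /yo cast_ordK (unsplitK (inr i : 'I_n + 'I_n)). Qed.

Definition mkpt (u v : 'I_n -> R) : 'cV[R]_N := \col_j pairfun u v j.

Lemma mkpt_x u v i : mkpt u v (xo i) 0 = u i.
Proof. by rewrite mxE pairfun_x. Qed.

Lemma mkpt_y u v i : mkpt u v (yo i) 0 = v i.
Proof. by rewrite mxE pairfun_y. Qed.

Lemma sum_coords (F : 'I_N -> R) :
  \sum_j F j = \sum_i F (xo i) + \sum_i F (yo i).
Proof.
rewrite (reindex (cast_ord (addnn n))) /=; last first.
  by exists (cast_ord (esym (addnn n))) => j _; rewrite ?cast_ordK ?cast_ordKV.
by rewrite big_split_ord.
Qed.

Lemma dot_mkpt u v (z : 'cV[R]_N) :
  \sum_j mkpt u v j 0 * z j 0 = \sum_i (u i * z (xo i) 0 + v i * z (yo i) 0).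
Proof.
rewrite sum_coords big_split /=.
by congr (_ + _); apply: eq_bigr => i _; rewrite ?mkpt_x ?mkpt_y.
Qed.

Definition delta (i k : 'I_n) : R := (k == i)%:R.

Lemma sum_delta i (F : 'I_n -> R) : \sum_k delta i k * F k = F i.
Proof.
rewrite (bigD1 i) //= /delta eqxx mul1r big1 ?addr0 // => k /negPf ->.
by rewrite mul0r.
Qed.

(* The instance I*: maximize -(y_0 + ... + y_{n-1}) subject to
     x_i - y_i / 2 <= 1/2,   -x_i - y_i / 2 <= -1/2      (each i < n),
     y_0 + ... + y_{n-1} <= n - 1.
   The pair constraints say |x_i - 1/2| <= y_i / 2: an integral x_i forces
   y_i = 1, while y_i = 0 forces x_i = 1/2.  The constraint matrix stacks
   two blocks of [pair_rows] (n rows, row i being alpha x_i + beta y_i) and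
   the [budget_row]. *)
Definition pair_rows (alpha beta : R) : 'M[R]_(n, N) :=
  \matrix_(i, j) mkpt (fun k => alpha * delta i k) (fun k => beta * delta i k) j 0.

Lemma pair_rowsE alpha beta (z : 'cV[R]_N) i :
  (pair_rows alpha beta *m z) i 0 = alpha * z (xo i) 0 + beta * z (yo i) 0.
Proof.
rewrite mxE; under eq_bigr do rewrite mxE.
rewrite dot_mkpt big_split /=.
by congr (_ + _); rewrite -(sum_delta i (fun k => _ * z _ 0));
  apply: eq_bigr => k _; rewrite mulrA [_ * delta _ _]mulrC.
Qed.

Definition ysum (z : 'cV[R]_N) : R := \sum_i z (yo i) 0.

Definition budget_row : 'rV[R]_N :=
  \row_j mkpt (fun _ => 0) (fun _ => 1) j 0.

Lemma budget_rowE (z : 'cV[R]_N) r : (budget_row *m z) r 0 = ysum z.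
Proof.
rewrite mxE; under eq_bigr do rewrite mxE.
by rewrite dot_mkpt; apply: eq_bigr => i _; rewrite mul0r mul1r add0r.
Qed.

Definition Astar : 'M[R]_(n + n + 1, N) :=
  col_mx (col_mx (pair_rows 1 (- 2^-1)) (pair_rows (-1) (- 2^-1))) budget_row.
Definition bstar : 'cV[R]_(n + n + 1) :=
  col_mx (col_mx (const_mx 2^-1) (const_mx (- 2^-1))) (const_mx (n%:R - 1)).
Definition cstar : 'cV[R]_N := mkpt (fun _ => 0) (fun _ => -1).

Lemma objval_cstar (z : 'cV[R]_N) : objval cstar z = - ysum z.
Proof.
rewrite /objval dot_mkpt -sumrN; apply: eq_bigr => i _; ring.
Qed.

Definition pair_ok (x y : R) : Prop := x - y / 2 <= 1 / 2 /\ 1 / 2 <= x + y / 2.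

Lemma rows_ok (z : 'cV[R]_N) :
  (forall r, (Astar *m z) r 0 <= bstar r 0) <->
  (forall i, pair_ok (z (xo i) 0) (z (yo i) 0)) /\ ysum z <= n%:R - 1.
Proof.
rewrite !col_mx_system; split.
  move=> [[H1 H2] H3]; split; last by have := H3 0; rewrite budget_rowE mxE.
  move=> i; have := H1 i; have := H2 i; rewrite !pair_rowsE !mxE /pair_ok; lra.
move=> [Hp Hs]; split; last by move=> r; rewrite budget_rowE mxE.
by split=> i; rewrite pair_rowsE mxE; have := Hp i; rewrite /pair_ok; lra.
Qed.

Lemma pair_ok_integral x y : pair_ok x y -> x = 0 \/ x = 1 -> 1 <= y.
Proof. by rewrite /pair_ok => hp [] hx; rewrite hx in hp; lra. Qed.

Lemma pair_ok_y0 x : pair_ok x 0 -> x = 1 / 2.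
Proof. by rewrite /pair_ok; lra. Qed.

Lemma not_all_y_one f (z : 'cV[R]_N) :
  node_feas Astar bstar f z -> ~ (forall i, 1 <= z (yo i) 0).
Proof.
case=> /rows_ok [_ hsum] _ hy.
have : n%:R <= ysum z.
  by rewrite -[n]card_ord -sumr_const; apply: ler_sum => i _; exact: hy.
lra.
Qed.

Lemma no_integral_point f (z : 'cV[R]_N) :
  node_feas Astar bstar f z -> ~ integral z.
Proof.
move=> hz hint; apply: (not_all_y_one hz) => i.
by case: hz => /rows_ok [hp _] _; apply: pair_ok_integral (hp i) (hint (xo i)).
Qed.

Lemma ymin_optimal f (p : 'cV[R]_N) : node_feas Astar bstar f p ->
  (forall z, node_feas Astar bstar f z -> forall i, p (yo i) 0 <= z (yo i) 0) ->
  (forall z, node_feas Astar bstar f z -> objval cstar z <= objval cstar p) /\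
  (forall z, node_feas Astar bstar f z -> objval cstar p <= objval cstar z ->
     forall i, z (yo i) 0 = p (yo i) 0).
Proof.
move=> hp hmin; split=> z hz; rewrite !objval_cstar.
  by rewrite lerN2; apply: ler_sum => i _; exact: hmin.
rewrite lerN2 => hle i.
have gap k : 0 <= z (yo k) 0 - p (yo k) 0 by rewrite subr_ge0 hmin.
have sum0 : \sum_k (z (yo k) 0 - p (yo k) 0) = 0.
  apply/eqP; rewrite eq_le sumr_ge0 // andbT sumrB subr_le0; exact: hle.
have /eqP := @psumr_eq0P _ _ predT _ (fun k _ => gap k) sum0 i isT.
by rewrite subr_eq0 => /eqP.
Qed.

(* Fractional branching from the root only ever fixes x-variables;
   [fixed_x f] records which ones. *)
Definition x_only (f : fixing N) : Prop := forall i, f (yo i) = None.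
Definition fixed_x (f : fixing N) : {set 'I_n} := [set i | f (xo i) != None].

(* The canonical optimal vertex of such a node: a fixed x_i keeps its value
   with y_i = 1, a free x_i is 1/2 with y_i = 0. *)
Definition vertex (f : fixing N) : 'cV[R]_N :=
  mkpt (fun i => if f (xo i) is Some s then (s : nat)%:R else 1 / 2)
       (fun i => (f (xo i) != None)%:R).

Lemma ysum_vertex f : ysum (vertex f) = #|fixed_x f|%:R.
Proof.
rewrite /ysum; under eq_bigr do rewrite mkpt_y.
rewrite -natr_sum -sum1_card [in RHS]big_mkcond /=; congr _%:R.
by apply: eq_bigr => i _; rewrite inE; case: (_ != None).
Qed.

Lemma vertex_feasible f : x_only f -> (#|fixed_x f| < n)%N ->
  node_feas Astar bstar f (vertex f).
Proof.
move=> honly hcard; split; [apply/rows_ok; split | split].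
- by move=> i; rewrite mkpt_x mkpt_y /pair_ok; case: (f (xo i)) => [[]|] /=; lra.
- have : (#|fixed_x f|.+1)%:R <= n%:R :> R by rewrite ler_nat.
  by rewrite ysum_vertex -addn1 natrD; lra.
- move=> j; case: (coordP j) => i; rewrite ?mkpt_x ?mkpt_y;
    by case: (f (xo i)) => [[]|] /=; lra.
- move=> j s; case: (coordP j) => i; last by rewrite honly.
  by rewrite mkpt_x => ->.
Qed.

Lemma vertex_ymin f (z : 'cV[R]_N) : node_feas Astar bstar f z ->
  forall i, vertex f (yo i) 0 <= z (yo i) 0.
Proof.
case=> /rows_ok [hp _] [hbox hfix] i; rewrite mkpt_y.
case hf: (f (xo i)) => [s|] /=; last by case/andP: (hbox (yo i)).
by apply: pair_ok_integral (hp i) _; rewrite (hfix _ _ hf); case: s {hf}; [right|left].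
Qed.

Lemma opt_vertex_y f (x : 'cV[R]_N) : x_only f -> (#|fixed_x f| < n)%N ->
  lp_opt_extreme Astar bstar cstar f x -> forall i, x (yo i) 0 = vertex f (yo i) 0.
Proof.
move=> honly hcard [[hx _] hopt].
have [_ same] := ymin_optimal (vertex_feasible honly hcard) (@vertex_ymin f).
by move=> i; apply: same => //; apply: hopt; exact: vertex_feasible.
Qed.

Lemma fractional_free f (x : 'cV[R]_N) j : x_only f -> (#|fixed_x f| < n)%N ->
  lp_opt_extreme Astar bstar cstar f x -> fractional_at x j ->
  exists2 i, j = xo i & f (xo i) = None.
Proof.
move=> honly hcard hx /andP [h0 h1].
case: (coordP j) hx h0 h1 => i hx h0 h1.
  exists i => //; case hf: (f (xo i)) => [s|] //.
  case: hx => [[[_ [_ hfix]] _] _].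
  by exfalso; move: h0 h1; rewrite (hfix _ _ hf); case: s {hf} => /=; lra.
exfalso; move: h0 h1; rewrite (opt_vertex_y honly hcard hx) mkpt_y.
by case: (_ != None) => /=; lra.
Qed.

Lemma fixed_x_step f i s : f (xo i) = None ->
  fixed_x (fix_var f (xo i) s) = i |: fixed_x f.
Proof.
by move=> hf; apply/setP => k; rewrite !inE /fix_var (inj_eq xo_inj); case: (k =P i).
Qed.

Definition room (f : fixing N) (k : nat) : Prop :=
  x_only f /\ (#|fixed_x f| + k <= n)%N.

Lemma room_feasible f k : room f k.+1 -> exists x, node_feas Astar bstar f x.
Proof. by move=> [honly hk]; exists (vertex f); apply: vertex_feasible => //; lia. Qed.

Lemma room_branch f k (x : 'cV[R]_N) j s : room f k.+1 ->
  lp_opt_extreme Astar bstar cstar f x -> fractional_at x j ->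
  room (fix_var f j s) k.
Proof.
move=> [honly hk] hx hj.
have hcard : (#|fixed_x f| < n)%N by lia.
have [i -> hfree] := fractional_free honly hcard hx hj.
split; first by move=> i'; rewrite /fix_var eq_sym (negbTE (xo_neq_yo _ _)) honly.
by rewrite fixed_x_step // cardsU1 inE hfree add1n addSnnS.
Qed.

Lemma fractional_lower_bound (t : bbtree R N) :
  solves Astar bstar cstar t -> fractional_branching t ->
  (2 ^ n.+1 - 1 <= tree_size t)%N.
Proof.
move=> hs hfr.
have hroot : room (@root_fixing N) n.
  split=> //; have -> : fixed_x (@root_fixing N) = set0.
    by apply/setP => i; rewrite !inE.
  by rewrite cards0.
apply: (complete_tree_size room_feasible room_branch hroot (proj1 hs) hfr).
exact: solves_infeasible_leaves no_integral_point hs.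
Qed.

(* The certificate tree branches on y_0, ..., y_{n-1} in turn; along its
   right spine the node at depth i has y_0 = ... = y_{i-1} = 1 fixed. *)
Definition prefix_fixing (i : nat) : fixing N :=
  pairfun (fun _ => None) (fun k => if (k < i)%N then Some true else None).

Lemma prefix_fixing_x i k : prefix_fixing i (xo k) = None.
Proof. exact: pairfun_x. Qed.

Lemma prefix_fixing_y i k :
  prefix_fixing i (yo k) = if (k < i)%N then Some true else None.
Proof. exact: pairfun_y. Qed.

Lemma prefix_fixing_step (k : 'I_n) :
  fix_var (prefix_fixing k) (yo k) true = prefix_fixing k.+1.
Proof.
apply: functional_extensionality => j; rewrite /fix_var.
case: (coordP j) => k'; first by rewrite (negbTE (xo_neq_yo _ _)) !prefix_fixing_x.
rewrite (inj_eq yo_inj) !prefix_fixing_y ltnS.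
case: (k' =P k) => [-> | ne]; first by rewrite leqnn.
by case: ltngtP => // /val_inj /ne.
Qed.

Definition prefix_point (i : nat) : 'cV[R]_N :=
  mkpt (fun k => if (k < i)%N then 0 else 1 / 2) (fun k => ((k < i)%N)%:R).

Lemma ysum_prefix_point i : (i <= n)%N -> ysum (prefix_point i) = i%:R.
Proof.
move=> hi; rewrite /ysum; under eq_bigr do rewrite mkpt_y.
rewrite -natr_sum; congr _%:R.
have -> : (\sum_(k < n) ((k < i)%N : nat))%N = (\sum_(k < n | (k < i)%N) 1)%N.
  by rewrite [RHS]big_mkcond; apply: eq_bigr => k _; case: (k < i)%N.
by rewrite -(big_ord_widen n (fun _ => 1%N) hi) sum_nat_const card_ord muln1.
Qed.

Lemma prefix_point_opt h i : (i < n)%N -> (forall k, h (xo k) = None) ->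
  (forall k : 'I_n, (k < i)%N -> h (yo k) = Some true) ->
  (forall k : 'I_n, (i <= k)%N -> h (yo k) = None \/ h (yo k) = Some false) ->
  lp_opt_extreme Astar bstar cstar h (prefix_point i).
Proof.
move=> hi hx hlo hhi.
have hp : node_feas Astar bstar h (prefix_point i).
  split; [apply/rows_ok; split | split].
  - by move=> k; rewrite mkpt_x mkpt_y /pair_ok; case: (k < i)%N => /=; lra.
  - have : (i.+1)%:R <= n%:R :> R by rewrite ler_nat.
    by rewrite ysum_prefix_point ?(ltnW hi) // -addn1 natrD; lra.
  - by move=> j; case: (coordP j) => k; rewrite ?mkpt_x ?mkpt_y;
      case: (k < i)%N => /=; lra.
  - move=> j s; case: (coordP j) => k; first by rewrite hx.
    rewrite mkpt_y; case: (ltnP k i) => hk; first by rewrite hlo // => -[<-].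
    by case: (hhi k hk) => -> // [<-].
have hmin z : node_feas Astar bstar h z ->
    forall k, prefix_point i (yo k) 0 <= z (yo k) 0.
  case=> _ [hbox hfix] k; rewrite mkpt_y; case: (ltnP k i) => hk /=.
    by rewrite (hfix _ _ (hlo k hk)).
  by case/andP: (hbox (yo k)).
have [hopt same] := ymin_optimal hp hmin.
apply: opt_extreme_of_support => // z hz hle j; case: (coordP j) => k; last first.
  by move=> _; exact: same.
rewrite !mkpt_x; case: (ltnP k i) => hk /=; first by rewrite eqxx.
have zy : z (yo k) 0 = 0 by rewrite (same z hz hle) mkpt_y ltnNge hk.
by move=> _; case: hz => /rows_ok [hpair _] _; apply: pair_ok_y0; rewrite -zy.
Qed.

(* With all y-variables fixed to 1 the budget is violated. *)
Lemma prefix_fixing_infeasible i :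
  (n <= i)%N -> lp_infeasible Astar bstar (prefix_fixing i).
Proof.
move=> hi z hz; apply: (not_all_y_one hz) => k.
case: hz => _ [_ hfix]; rewrite (hfix (yo k) true) // prefix_fixing_y.
by rewrite (leq_trans (ltn_ord k) hi).
Qed.

(* Fixing y_k = 0 forces x_k = 1/2, so x_k cannot be fixed as well. *)
Lemma fixed_pair_infeasible h k s :
  h (yo k) = Some false -> h (xo k) = Some s -> lp_infeasible Astar bstar h.
Proof.
move=> hy hx z [/rows_ok [hpair _] [_ hfix]].
have := hpair k; rewrite (hfix _ _ hy) (hfix _ _ hx) => /pair_ok_y0.
by case: s {hx} => /=; lra.
Qed.

(* The certificate: branch on y_k; for y_k = 0 branch on x_k (both children
   infeasible), for y_k = 1 continue with the next k. *)
Fixpoint cert (s : seq 'I_n) : bbtree R N :=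
  match s with
  | [::] => BLeaf None
  | k :: s' => BNode (prefix_point k) (yo k)
      (BNode (prefix_point k) (xo k) (BLeaf None) (BLeaf None)) (cert s')
  end.

Lemma cert_size s : tree_size (cert s) = (4 * size s + 1)%N.
Proof. by elim: s => [|k s IH] //=; rewrite IH; lia. Qed.

Lemma cert_leaves s x : Some x \notin leaf_sols (cert s).
Proof. by elim: s => [|k s IH] //=; rewrite !mem_cat !inE. Qed.

Lemma cert_valid s i : map val s = iota i (n - i) ->
  valid_tree Astar bstar cstar (prefix_fixing i) (cert s).
Proof.
elim: s i => [|k s IH] i /=.
  by case E: (n - i)%N => // _; apply: prefix_fixing_infeasible; lia.
case E: (n - i)%N => [|e] // [hk hs]; subst i.
have hyx k' : (yo k' == xo k) = false by rewrite eq_sym (negbTE (xo_neq_yo _ _)).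
split; [|split; [split|]].
- apply: (prefix_point_opt (ltn_ord k)) => k';
    rewrite ?prefix_fixing_x ?prefix_fixing_y //.
  + by move=> ->.
  + by rewrite ltnNge => ->; left.
- apply: (prefix_point_opt (ltn_ord k)) => k';
    rewrite /fix_var ?(negbTE (xo_neq_yo _ _)) ?prefix_fixing_x //.
  + rewrite (inj_eq yo_inj) prefix_fixing_y => hk'.
    rewrite hk' (_ : (k' == k) = false) //.
    by apply/eqP => e'; rewrite e' ltnn in hk'.
  + rewrite (inj_eq yo_inj) prefix_fixing_y ltnNge => ->.
    by case: (k' == k); [right|left].
- split; apply: (@fixed_pair_infeasible _ k) => /=;
    by rewrite /fix_var ?hyx eqxx.
- rewrite prefix_fixing_step; apply: IH; rewrite hs; congr iota; lia.
Qed.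

Lemma certificate_tree :
  exists t : bbtree R N, solves Astar bstar cstar t /\ (tree_size t <= 4 * n + 1)%N.
Proof.
exists (cert (enum 'I_n)); split; last by rewrite cert_size size_enum_ord.
split; last by move=> x; rewrite (negbTE (cert_leaves _ x)).
have -> : @root_fixing N = prefix_fixing 0.
  apply: functional_extensionality => j.
  by case: (coordP j) => k; rewrite ?prefix_fixing_x ?prefix_fixing_y.
by apply: cert_valid; rewrite val_enum_ord subn0.
Qed.

End Instance.

Theorem corollary2p6 (R : realFieldType) (n : nat) :
  exists (m : nat) (A : 'M[R]_(m, n.*2)) (b : 'cV[R]_m) (c : 'cV[R]_(n.*2)),
    (forall t : bbtree R n.*2,
       solves A b c t -> fractional_branching t ->
       (2 ^ n.+1 - 1 <= tree_size t)%N) /\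
    (forall (score : R -> option R -> option R -> R) (t : bbtree R n.*2),
       solves A b c t -> strong_branching A b c score (@root_fixing _) t ->
       (2 ^ n.+1 - 1 <= tree_size t)%N) /\
    (exists t : bbtree R n.*2, solves A b c t /\ (tree_size t <= 4 * n + 1)%N).
Proof.
exists (n + n + 1)%N, (Astar R n), (bstar R n), (cstar R n).
split; [|split].
- exact: fractional_lower_bound.
- move=> score t hs /strong_branching_fractional; exact: fractional_lower_bound.
- exact: certificate_tree.
Qed.
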